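(* If $D$ is a quaternary near-extremal Hermitian self-dual code of length $36$ and $\alpha$ denotes the number of codewords of weight $12$ in $D$, then $\alpha=9\beta$ for some integer $\beta$ with $1\le\beta\le 7140$.
   Context: Let $\mathbb{F}_4=\{0,1,\omega,\omega^2\}$ with $\omega^2=\omega+1$. A quaternary code of length $n$ is a linear subspace of $\mathbb{F}_4^n$; it is Hermitian self-dual if it equals its dual with respect to $\langle x,y\rangle_H=\sum_k x_k y_k^2$. The weight of a vector is the number of nonzero coordinates. A quaternary Hermitian self-dual code of length $36$ is near-extremal if its minimum nonzero weight is $12$. *)

From mathcomp Require Import all_boot all_algebra all_field.
Set Implicit Arguments. Unset Strict Implicit. Unset Printing Implicit Defensive.
Import GRing.Theory.
Local Open Scope ring_scope.

(* F is any field with exactly 4 elements (unique up to isomorphism: F_4). *)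

Definition herm_ip (F : finFieldType) n (x y : 'rV[F]_n) : F :=
  \sum_(k < n) x ord0 k * (y ord0 k) ^+ 2.

Definition wt (F : finFieldType) n (x : 'rV[F]_n) : nat :=
  #|[set k : 'I_n | x ord0 k != 0]|.

Definition herm_dual (F : finFieldType) n (C : {vspace 'rV[F]_n}) : {set 'rV[F]_n} :=
  [set y : 'rV[F]_n | [forall x : 'rV[F]_n, (x \in C) ==> (herm_ip x y == 0)]].

Definition herm_self_dual (F : finFieldType) n (C : {vspace 'rV[F]_n}) : Prop :=
  forall y : 'rV[F]_n, (y \in C) = (y \in herm_dual C).

Definition min_weight (F : finFieldType) n (C : {vspace 'rV[F]_n}) (d : nat) : Prop :=
  (forall x : 'rV[F]_n, x \in C -> x != 0 -> (d <= wt x)%N) /\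
  (exists2 x : 'rV[F]_n, x \in C & (x != 0) && (wt x == d)).

Definition num_weight (F : finFieldType) n (C : {vspace 'rV[F]_n}) (w : nat) : nat :=
  #|[set x : 'rV[F]_n | (x \in C) && (wt x == w)]|.

From Stdlib Require Import ZArith.
From mathcomp Require Import all_boot all_algebra all_field ssrZ zify.
Set Implicit Arguments. Unset Strict Implicit. Unset Printing Implicit Defensive.
Import GRing.Theory Num.Theory.
Local Open Scope ring_scope.

(* Fix a coordinate i and count the codewords of D by whether they vanish at i
   and by their weight j on the other 35 coordinates.  The MacWilliams identity
   for the Hermitian form, proved with the additive character (-1)^(x + x^2) of
   F_4 and with a separate weight variable at i, turns into two polynomial
   identities between these split enumerators.  For a near-extremal code only 25
   counts are unknown (weights are even and at least 12), and two integer
   combinations of the coefficients of Y^0, ..., Y^11 give A_12 = 3 E and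
   12 A_12 + A_14 = 771120, where E counts the weight-12 words not vanishing
   at i.  Scaling by the three nonzero constants makes E divisible by 3, so
   A_12 = 9 beta, and A_14 >= 0 gives 108 beta <= 771120. *)

(* [kraw a b k] is the coefficient of Y^k in (1 + 3Y)^a (1 - Y)^b, i.e. the
   quaternary Krawtchouk number K_k(b) of length a + b, computed by multiplying
   out one linear factor at a time. *)
Definition mul_lin (c : Z) (s : seq Z) : seq Z :=
  [seq s`_k + (if k is k'.+1 then c * s`_k' else 0) | k <- iota 0 (size s).+1].

Definition kraw_seq (a b : nat) : seq Z := iter a (mul_lin 3) (iter b (mul_lin (-1)) [:: 1]).

Definition kraw (a b k : nat) : Z := (kraw_seq a b)`_k.

Lemma nth_mul_lin c s k :
  (mul_lin c s)`_k = s`_k + (if k is k'.+1 then c * s`_k' else 0).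
Proof.
have [k_lt | k_ge] := ltnP k (size s).+1.
  by rewrite (nth_map 0%N) ?size_iota // nth_iota.
rewrite !nth_default ?size_map ?size_iota //; last exact: ltnW.
by case: k k_ge => // k; rewrite ltnS => k_ge; rewrite nth_default // mulr0 addr0.
Qed.

Lemma coef_mul_lin (c : Z) (p : {poly Z}) k :
  ((1 + c%:P * 'X) * p)`_k = p`_k + (if k is k'.+1 then c * p`_k' else 0).
Proof. by rewrite mulrDl mul1r coefD -mulrA coefCM coefXM; case: k; rewrite ?mulr0. Qed.

Lemma coef_kraw a b k :
  ((1 + 3%:P * 'X) ^+ a * (1 + (-1)%:P * 'X) ^+ b)`_k = kraw a b k.
Proof.
rewrite /kraw /kraw_seq; elim: a k => [|a IHa] k.
  rewrite expr0 mul1r; elim: b k => [|b IHb] k.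
    by rewrite expr0 coef1; case: k => [|k]; rewrite /= ?nth_nil ?mulr0n; reflexivity.
  by rewrite exprS coef_mul_lin nth_mul_lin IHb; case: k => // k; rewrite IHb.
by rewrite exprS -mulrA coef_mul_lin nth_mul_lin IHa; case: k => // k; rewrite IHa.
Qed.

Section QuaternaryField.

Variable F : finFieldType.
Hypothesis cardF : #|F| = 4%N.

Lemma pchar_F4 : 2%N \in [pchar F].
Proof. by apply: (@card_finPcharP _ 2 2); rewrite ?cardF. Qed.

Let addrr (x : F) : x + x = 0 := addrr_pchar2 pchar_F4 x.

Lemma expF4 (x : F) : x ^+ 4 = x.
Proof. by rewrite -cardF expf_card. Qed.

Lemma cube_F4 (x : F) : x != 0 -> x ^+ 3 = 1.
Proof. by move=> x_nz; apply: (mulfI x_nz); rewrite mulr1 -exprS expF4. Qed.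

Definition trace4 (x : F) : F := x + x ^+ 2.

Lemma trace4D x y : trace4 (x + y) = trace4 x + trace4 y.
Proof. by rewrite /trace4 sqrrD (mulrn_pchar pchar_F4) addr0 addrACA. Qed.

Lemma trace4_sq x : trace4 x ^+ 2 = trace4 x.
Proof. by rewrite /trace4 sqrrD (mulrn_pchar pchar_F4) addr0 -exprM expF4 addrC. Qed.

Lemma trace4_01 x : (trace4 x == 0) || (trace4 x == 1).
Proof.
have : trace4 x * (trace4 x - 1) = 0 by rewrite mulrBr mulr1 -expr2 trace4_sq subrr.
by move/eqP; rewrite mulf_eq0 subr_eq0.
Qed.

Lemma trace4_neq0 : exists a, trace4 a != 0.
Proof.
apply/existsP; apply: contraT; rewrite negb_exists => /forallP tr0.
suff : (#|F| <= 2)%N by rewrite cardF.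
apply: leq_trans (card_size [:: (0 : F); 1]); apply: subset_leq_card; apply/subsetP => x _.
have : x * (x - 1) = 0.
  by move/negPn/eqP: (tr0 x); rewrite mulrBr mulr1 -expr2 (oppr_pchar2 pchar_F4) addrC.
by move/eqP; rewrite mulf_eq0 subr_eq0 !inE.
Qed.

Definition chi (x : F) : int := if trace4 x == 0 then 1 else -1.

Lemma chi0 : chi 0 = 1.
Proof. by rewrite /chi /trace4 expr0n addr0 eqxx. Qed.

Lemma chiD x y : chi (x + y) = chi x * chi y.
Proof.
rewrite /chi trace4D.
by case/orP: (trace4_01 x) => /eqP->; case/orP: (trace4_01 y) => /eqP->;
   rewrite ?addr0 ?add0r ?addrr ?eqxx ?oner_eq0.
Qed.

Lemma sum_chi : \sum_x chi x = 0.
Proof.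
have [a tra] := trace4_neq0.
have chia : chi a = -1 by rewrite /chi (negbTE tra).
have : \sum_x chi x = - \sum_x chi x.
  rewrite {1}(reindex_inj (addIr a)) -sumrN /=.
  by apply: eq_bigr => x _; rewrite chiD chia mulrN1.
by lia.
Qed.

Lemma sum_chi_scaled_sq c : c != 0 -> \sum_b chi (c * b ^+ 2) = 0.
Proof.
move=> c_nz; have inj_csq : injective (fun b => c * b ^+ 2).
  move=> b b' /(mulfI c_nz) sq_eq; apply/eqP.
  have : (b - b') ^+ 2 == 0 by rewrite sqrrB (mulrn_pchar pchar_F4) subr0 sq_eq addrr.
  by rewrite expf_eq0 subr_eq0.
by have := sum_chi; rewrite (reindex_inj inj_csq).
Qed.

Lemma chi_sum (I : finType) (G : I -> F) : chi (\sum_i G i) = \prod_i chi (G i).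
Proof. exact: (big_morph chi chiD chi0). Qed.

Definition hw {R : pzRingType} (s t : R) (x : F) : R := if x == 0 then s else t.

Lemma hw_transform (R : comPzRingType) (s t : R) c :
  \sum_b hw s t b * (chi (c * b ^+ 2))%:~R = hw (s + 3 * t) (s - t) c.
Proof.
rewrite (bigD1 0) //= expr0n mulr0 chi0 /hw eqxx mulr1.
rewrite (eq_bigr (fun b => t * (chi (c * b ^+ 2))%:~R)) => [|b /negbTE ->] //.
rewrite -mulr_sumr -rmorph_sum.
have [->|c_nz] := eqVneq c 0.
  rewrite (eq_bigr (fun=> 1)) => [|b _]; last by rewrite mul0r chi0.
  by rewrite sumr_const cardC1 cardF mulrC.
have : \sum_b chi (c * b ^+ 2) = 0 := sum_chi_scaled_sq c_nz.
rewrite (bigD1 0) //= expr0n mulr0 chi0 => /(canRL (addKr 1)) ->.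
by rewrite addr0 mulrN1.
Qed.

Lemma herm_ipDl n (x z y : 'rV[F]_n) : herm_ip (x + z) y = herm_ip x y + herm_ip z y.
Proof. by rewrite /herm_ip -big_split; apply: eq_bigr => k _; rewrite mxE mulrDl. Qed.

Lemma herm_ipZl n a (x y : 'rV[F]_n) : herm_ip (a *: x) y = a * herm_ip x y.
Proof. by rewrite /herm_ip mulr_sumr; apply: eq_bigr => k _; rewrite mxE mulrA. Qed.

Definition wt_off n (i : 'I_n) (y : 'rV[F]_n) : nat :=
  #|[set k | (k != i) && (y ord0 k != 0)]|.

Definition split_count n (D : {vspace 'rV[F]_n}) (i : 'I_n) (b : bool) (j : nat) : nat :=
  #|[set y | (y \in D) && ((y ord0 i != 0) == b) && (wt_off i y == j)]|.

(* Entries of the one-coordinate MacWilliams matrix: the transform of the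
   indicator of zero (e = false) or of nonzero (e = true) entries. *)
Definition mw_kernel {R : pzRingType} (e b : bool) : R :=
  if e then (if b then -1 else 3) else 1.

Lemma wt_off_lt n i (y : 'rV[F]_n) : (wt_off i y < n)%N.
Proof.
rewrite -[n in (_ < n)%N]card_ord; apply: proper_card; apply/properP.
split; first by apply/subsetP.
by exists i; rewrite ?inE ?eqxx.
Qed.

Lemma card_off_zero n i (y : 'rV[F]_n) :
  #|[set k | (k != i) && (y ord0 k == 0)]| = (n.-1 - wt_off i y)%N.
Proof.
have -> : [set k | (k != i) && (y ord0 k == 0)] = [set~ i] :&: [set k | y ord0 k == 0].
  by apply/setP => k; rewrite !inE.
have -> : wt_off i y = #|[set~ i] :\: [set k | y ord0 k == 0]|.
  by apply: eq_card => k; rewrite !inE andbC.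
by have := cardsID [set k | y ord0 k == 0] [set~ i]; rewrite cardsC1 card_ord => <-; rewrite addnK.
Qed.

Lemma prod_hw_split (R : comPzRingType) n i (u v X Y : R) (y : 'rV[F]_n) :
  \prod_k hw (if k == i then u else X) (if k == i then v else Y) (y ord0 k)
  = hw u v (y ord0 i) * (X ^+ (n.-1 - wt_off i y) * Y ^+ wt_off i y).
Proof.
rewrite (bigD1 i) //= eqxx; congr (_ * _).
rewrite (bigID (fun k => y ord0 k == 0)) /= -!card_off_zero /wt_off.
rewrite (eq_bigr (fun=> X)) => [|k /andP[/negbTE -> y0]]; last by rewrite /hw y0.
rewrite [X in _ * X](eq_bigr (fun=> Y)) => [|k /andP[/negbTE -> /negbTE y0]];
  last by rewrite /hw y0.
by rewrite !prodr_const; congr (X ^+ _ * Y ^+ _); apply: eq_card => k; rewrite inE.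
Qed.

Lemma sum_by_wt_off (V : nmodType) n i (P : pred 'rV[F]_n) (G : nat -> V) :
  \sum_(y | P y) G (wt_off i y) = \sum_(j < n) G j *+ #|[set y | P y && (wt_off i y == j)]|.
Proof.
rewrite (partition_big (fun y => Ordinal (wt_off_lt i y)) predT) //=.
apply: eq_bigr => j _; rewrite -sumr_const /=.
rewrite (eq_bigr (fun=> G j)) => [|y /andP[_ /eqP <-]] //.
by apply: eq_bigl => y; rewrite inE -val_eqE.
Qed.

Definition admissible_wt (d w : nat) : bool := (w == 0)%N || (d <= w)%N && ~~ odd w.

Section SelfDualCode.

Variables (n : nat) (D : {vspace 'rV[F]_n}).
Hypothesis D_sd : herm_self_dual D.

Lemma herm_ip_self_dual x y : x \in D -> y \in D -> herm_ip x y = 0.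
Proof. by move=> xD; rewrite D_sd inE => /forallP/(_ x)/implyP/(_ xD)/eqP. Qed.

Lemma sum_chi_herm_ip y :
  \sum_(x in D) chi (herm_ip x y) = if y \in D then (#|D|)%:R else 0.
Proof.
case: ifPn => yD.
  rewrite (eq_bigr (fun=> 1)) ?sumr_const // => x xD.
  by rewrite herm_ip_self_dual ?chi0.
have [x0 x0D ip_nz] : exists2 x0, x0 \in D & herm_ip x0 y != 0.
  move: yD; rewrite D_sd inE negb_forall => /existsP[x0].
  by rewrite negb_imply => /andP[x0D ip_nz]; exists x0.
have [a tra] := trace4_neq0.
pose z := (a / herm_ip x0 y) *: x0.
have zD : z \in D by rewrite memvZ.
have ip_z : herm_ip z y = a by rewrite herm_ipZl divfK.
(* Translating by z, whose product with y has trace 1, flips every sign. *)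
have : \sum_(x in D) chi (herm_ip x y) = - \sum_(x in D) chi (herm_ip x y).
  rewrite {1}(reindex_inj (addIr z)) -sumrN /=.
  apply: eq_big => [x|x xD]; first by rewrite rpredDr.
  by rewrite herm_ipDl ip_z chiD /chi (negbTE tra) mulrN1.
by lia.
Qed.

Lemma herm_MacWilliams (R : comPzRingType) (s t : 'I_n -> R) :
  (#|D|)%:R * \sum_(y in D) \prod_k hw (s k) (t k) (y ord0 k)
  = \sum_(x in D) \prod_k hw (s k + 3 * t k) (s k - t k) (x ord0 k).
Proof.
have expand (x : 'rV[F]_n) : \prod_k hw (s k + 3 * t k) (s k - t k) (x ord0 k)
    = \sum_(f : {ffun 'I_n -> F}) (\prod_k hw (s k) (t k) (f k))
                                    * (chi (herm_ip x (\row_k f k)))%:~R.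
  rewrite (eq_bigr _ (fun k _ => esym (hw_transform (s k) (t k) (x ord0 k)))).
  rewrite bigA_distr_bigA; apply: eq_bigr => f _.
  rewrite big_split /= /herm_ip chi_sum rmorph_prod; congr (_ * _).
  by apply: eq_bigr => k _; rewrite mxE.
rewrite (eq_bigr _ (fun x _ => expand x)) exchange_big /=.
rewrite (eq_bigr (fun f : {ffun 'I_n -> F} => (\prod_k hw (s k) (t k) (f k))
                           * (if \row_k f k \in D then (#|D|)%:R else 0))); last first.
  move=> f _; rewrite -mulr_sumr -rmorph_sum sum_chi_herm_ip.
  by case: ifP; rewrite ?rmorph_nat ?rmorph0.
have row_bij : bijective (fun f : {ffun 'I_n -> F} => \row_k f k).
  exists (fun y : 'rV[F]_n => [ffun k => y ord0 k]) => [f|y].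
    by apply/ffunP => k; rewrite ffunE mxE.
  by apply/rowP => k; rewrite mxE ffunE.
rewrite (reindex _ (onW_bij _ row_bij)) mulr_sumr big_mkcond /=.
apply: eq_bigr => f _; case: ifP => _; last by rewrite mulr0.
by rewrite mulrC; congr (_ * _); apply: eq_bigr => k _; rewrite mxE.
Qed.

Lemma sum_split_count (R : pzSemiRingType) i (b : bool) (G : nat -> R) :
  \sum_(y | (y \in D) && ((y ord0 i != 0) == b)) G (wt_off i y)
  = \sum_(j < n) (split_count D i b j)%:R * G j.
Proof. by rewrite sum_by_wt_off; apply: eq_bigr => j _; rewrite mulr_natl. Qed.

Lemma split_MacWilliams (R : comPzRingType) i (e : bool) (X Y : R) :
  (#|D|)%:R * \sum_(j < n) (split_count D i e j)%:R * (X ^+ (n.-1 - j) * Y ^+ j)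
  = \sum_b mw_kernel e b
      * \sum_(j < n) (split_count D i b j)%:R * ((X + 3 * Y) ^+ (n.-1 - j) * (X - Y) ^+ j).
Proof.
have [u [v [hw_uv hw_uv']]] : exists u v : R,
    (forall x, hw u v x = if (x != 0) == e then 1 else 0)
    /\ (forall x, hw (u + 3 * v) (u - v) x = mw_kernel e (x != 0)).
  by case: e; [exists 0, 1 | exists 1, 0]; split=> x; rewrite /hw /mw_kernel; case: eqP;
     rewrite ?mulr0 ?mulr1 ?addr0 ?add0r ?subr0 ?sub0r.
have := herm_MacWilliams (fun k => if k == i then u else X) (fun k => if k == i then v else Y).
rewrite (eq_bigr _ (fun y _ => prod_hw_split i u v X Y y)).
rewrite [RHS](eq_bigr (fun x : 'rV[F]_n => mw_kernel e (x ord0 i != 0)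
    * ((X + 3 * Y) ^+ (n.-1 - wt_off i x) * (X - Y) ^+ wt_off i x))); last first.
  by move=> x _; rewrite -hw_uv' -prod_hw_split; apply: eq_bigr => k _; case: (k == i).
rewrite (eq_bigr (fun y : 'rV[F]_n => if (y ord0 i != 0) == e
                   then X ^+ (n.-1 - wt_off i y) * Y ^+ wt_off i y else 0)); last first.
  by move=> y _; rewrite hw_uv; case: ifP; rewrite ?mul1r ?mul0r.
rewrite -big_mkcondr (sum_split_count i e (fun j => X ^+ (n.-1 - j) * Y ^+ j)) => ->.
rewrite (partition_big (fun x : 'rV[F]_n => x ord0 i != 0) predT) //=; apply: eq_bigr => b _.
rewrite -(sum_split_count i b (fun j => (X + 3 * Y) ^+ (n.-1 - j) * (X - Y) ^+ j)) mulr_sumr.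
by apply: eq_bigr => x /andP[_ /eqP ->].
Qed.

Lemma card_self_dual : #|D| = (2 ^ n)%N.
Proof.
(* With all weights 1 the transformed weight is the indicator of 0. *)
have := herm_MacWilliams (R := int) (fun=> 1) (fun=> 1).
rewrite (eq_bigr (fun=> 1)) => [|y _]; last by rewrite big1 // => k _; rewrite /hw if_same.
have nz_term (x : 'rV[F]_n) : x != 0 -> \prod_k hw (1 + 3 * 1) (1 - 1) (x ord0 k) = 0 :> int.
  move=> x_nz; have [k xk_nz] : exists k, x ord0 k != 0.
    by apply/existsP; apply: contraR x_nz => /existsPn xk0; apply/eqP/rowP => k;
       rewrite mxE; apply/eqP/negPn.
  by rewrite (bigD1 k) //= /hw (negbTE xk_nz) subrr mul0r.
rewrite sumr_const (bigD1 0) ?mem0v //= [X in _ + X]big1 => [|x /andP[_ /nz_term] //].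
rewrite addr0 (eq_bigr (fun=> 4)) => [|k _]; last by rewrite /hw mxE eqxx.
rewrite prodr_const card_ord -natrM -natrX => /eqP; rewrite eqr_nat mulnn.
by rewrite -[4%N]/(2 ^ 2)%N -expnM mulnC expnM eqn_exp2r // => /eqP.
Qed.

Lemma wt_self_dual_even y : y \in D -> ~~ odd (wt y).
Proof.
move=> yD; have := herm_ip_self_dual yD yD.
have -> : herm_ip y y = (wt y)%:R.
  rewrite /herm_ip /wt -sumr_const [RHS]big_mkcond /=; apply: eq_bigr => k _.
  rewrite inE -exprS; case: eqP => [->|/eqP yk_nz]; first by rewrite expr0n.
  exact: cube_F4.
by move/eqP; rewrite -(dvdn_pcharf pchar_F4) dvdn2.
Qed.

Lemma wt_split i (y : 'rV[F]_n) : wt y = ((y ord0 i != 0%R) + wt_off i y)%N.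
Proof. by rewrite /wt (cardsD1 i) inE; congr (_ + _)%N; apply: eq_card => k; rewrite !inE. Qed.

Lemma split_count_false0 i : (split_count D i false 0 = 1)%N.
Proof.
rewrite /split_count (_ : [set y | _] = [set 0]) ?cards1 //; apply/setP => y.
rewrite !inE; have [->|y_nz] := eqVneq y 0.
  by rewrite mem0v mxE eqxx; apply/eqP/eq_card0 => k; rewrite !inE mxE eqxx andbF.
apply/negbTE; apply: contra y_nz => /andP[/andP[_ /eqP yi0] /eqP wt0].
apply/eqP/rowP => k; rewrite mxE; apply/eqP; apply: contraT => yk_nz.
suff : (0 < wt y)%N by rewrite (wt_split i) yi0 wt0.
by apply/card_gt0P; exists k; rewrite inE.
Qed.

Lemma split_count_true i j :
  split_count D i true j
  = (3 * #|[set y | (y \in D) && (y ord0 i == 1%R) && (wt_off i y == j)]|)%N.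
Proof.
rewrite /split_count -sum1_card.
rewrite (partition_big (fun y : 'rV[F]_n => y ord0 i) (fun c => c != 0)) /=; last first.
  by move=> y; rewrite inE eqb_id => /andP[/andP[]].
rewrite (eq_bigr (fun=> #|[set y | (y \in D) && (y ord0 i == 1) && (wt_off i y == j)]|)).
  rewrite sum_nat_const; congr (_ * _)%N.
  by rewrite -[3%N]/(4.-1) -cardF -(cardC1 0); apply: eq_card => c; rewrite !inE.
move=> c c_nz; rewrite (reindex_inj (scalerI c_nz)) /= -sum1_card.
apply: eq_bigl => z; rewrite !inE rpredZeq (negbTE c_nz) /= mxE mulf_eq0 (negbTE c_nz) /= eqb_id.
have -> : wt_off i (c *: z) = wt_off i z.
  by apply: eq_card => k; rewrite !inE mxE mulf_eq0 (negbTE c_nz).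
rewrite -{2}[c]mulr1 (inj_eq (mulfI c_nz)).
by case: (eqVneq (z ord0 i) 1) => [->|]; rewrite ?oner_eq0 ?andbT ?andbF.
Qed.

Lemma num_weight_split i w :
  num_weight D w.+1 = (split_count D i false w.+1 + split_count D i true w)%N.
Proof.
rewrite /num_weight -(cardsID [set y : 'rV[F]_n | y ord0 i == 0]); congr (_ + _)%N;
  apply: eq_card => y; rewrite !inE (wt_split i).
all: by case: (y \in D); case: (y ord0 i == 0); rewrite ?andbT ?andbF ?add1n ?eqSS.
Qed.

Lemma split_count_eq0 d i (b : bool) j :
  (forall x : 'rV[F]_n, x \in D -> x != 0 -> (d <= wt x)%N) -> ~~ admissible_wt d (b + j) ->
  split_count D i b j = 0%N.
Proof.
move=> min_wt; apply: contraNeq; rewrite -lt0n => /card_gt0P[y].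
rewrite inE => /andP[/andP[yD /eqP yi] /eqP wt_y].
rewrite /admissible_wt -yi -wt_y -wt_split (wt_self_dual_even yD) andbT.
by have [-> | /(min_wt y yD) ->] := eqVneq y 0; rewrite ?orbT // /wt cards_eq0;
   apply/orP; left; apply/eqP/setP => k; rewrite !inE mxE eqxx.
Qed.

Lemma split_MacWilliams_coef i e k : (k < n)%N ->
  (#|D|)%:R * (split_count D i e k)%:R
  = \sum_b mw_kernel e b * \sum_(j < n) (split_count D i b j)%:R * kraw (n.-1 - j) j k :> Z.
Proof.
move=> k_lt; have := congr1 (fun p : {poly Z} => p`_k) (split_MacWilliams i e 1 'X).
have coef_natM (m : nat) (p : {poly Z}) l : (m%:R * p)`_l = m%:R * p`_l.
  by rewrite !mulr_natl coefMn.
have coef_kernelM e' b (p : {poly Z}) l : (mw_kernel e' b * p)`_l = mw_kernel e' b * p`_l.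
  by case: e' b => [] []; rewrite /mw_kernel ?mul1r ?mulN1r ?coefN // coef_natM.
have coef_kraw' a b : ((1 + 3 * 'X) ^+ a * (1 - 'X) ^+ b)`_k = kraw a b k.
  by rewrite -coef_kraw polyCN polyC1 mulN1r polyC_natr.
rewrite coef_natM !coef_sum.
under eq_bigr do rewrite coef_natM expr1n mul1r coefXn.
under [in X in _ = X -> _]eq_bigr => b _ do
  rewrite coef_kernelM coef_sum (eq_bigr _ (fun j _ => coef_natM _ _ _)).
under [in X in _ = X -> _]eq_bigr => b _ do
  under eq_bigr => j _ do rewrite coef_kraw'.
move=> <-; congr (_ * _).
rewrite (bigD1 (Ordinal k_lt)) //= eqxx mulr1 big1 ?addr0 // => j.
by rewrite -val_eqE eq_sym => /negbTE /= ->; rewrite mulr0.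
Qed.

End SelfDualCode.

End QuaternaryField.

Section LinearCertificate.

Variables (R : idomainType) (I T : eqType).
Variables (idx : seq I) (x : I -> R) (row : T -> I -> R).

Definition lform (f : I -> R) : R := \sum_(i <- idx) x i * f i.

Definition lcomb (lam : T -> R) (ts : seq T) (i : I) : R :=
  foldr (fun t acc => lam t * row t i + acc) 0 ts.

Definition certifies (S : pred I) (lam : T -> R) (ts : seq T) (K : R) (L : I -> R) : bool :=
  (K != 0) && all (fun i => S i ==> (lcomb lam ts i == K * L i)) idx.

Lemma lform_lcomb lam ts : lform (lcomb lam ts) = \sum_(t <- ts) lam t * lform (row t).
Proof.
elim: ts => [|t ts IH]; first by rewrite big_nil /lform big1 // => i _; rewrite mulr0.
rewrite big_cons -IH /lform mulr_sumr -big_split /=; apply: eq_bigr => i _.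
by rewrite mulrDr mulrCA.
Qed.

Lemma certified_relation S lam ts K L :
  {in idx, forall i, ~~ S i -> x i = 0} -> {in ts, forall t, lform (row t) = 0} ->
  certifies S lam ts K L -> lform L = 0.
Proof.
move=> x_supp rows0 /andP[K_nz /allP agree].
have : K * lform L = \sum_(t <- ts) lam t * lform (row t).
  rewrite -lform_lcomb /lform mulr_sumr; apply: eq_big_seq => i i_idx; rewrite mulrCA.
  have := agree i i_idx; case: (S i) (x_supp i i_idx) => [_ /eqP -> // | /(_ isT) -> _].
  by rewrite !mul0r.
rewrite big_seq big1 => [/eqP|t /rows0 ->]; last by rewrite mulr0.
by rewrite mulf_eq0 (negbTE K_nz) => /eqP.
Qed.

Lemma lform_sparse (supp : seq I) L :
  uniq idx -> uniq supp -> all (mem idx) supp ->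
  all (fun i => (i \in supp) || (L i == 0)) idx ->
  lform L = \sum_(i <- supp) x i * L i.
Proof.
move=> idx_uniq supp_uniq /allP supp_idx /allP L_supp.
rewrite /lform (bigID (mem supp)) /= [X in _ + X]big1_seq ?addr0; last first.
  by move=> i /andP[i_supp /L_supp]; rewrite (negbTE i_supp) => /eqP ->; rewrite mulr0.
rewrite -big_filter; apply: perm_big; apply: uniq_perm => [||i]; rewrite ?filter_uniq //.
by rewrite mem_filter andb_idr // => /supp_idx.
Qed.

End LinearCertificate.

(* The index (b, j) stands for the number of codewords that are nonzero at the
   first coordinate iff b and have weight j on the others; the row (e, k) is
   the coefficient of Y^k in the e-th split MacWilliams identity, with
   |D| = 2^36. *)
Definition weights36 : seq (bool * nat) :=
  [seq (false, j) | j <- index_iota 0 36] ++ [seq (true, j) | j <- index_iota 0 36].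

Definition low_rows : seq (bool * nat) := [seq (e, k) | e <- [:: false; true], k <- iota 0 12].

Definition admissible36 (i : bool * nat) : bool := admissible_wt 12 (i.1 + i.2).

Definition coef_row36 (t i : bool * nat) : Z :=
  (if i == t then 2 ^+ 36 else 0) - mw_kernel t.1 i.1 * kraw (35 - i.2) i.2 t.2.

Section Certificates.
Local Open Scope Z_scope.

(* Both certificates were found by exact rational elimination on these 24
   rows; only the check below is relied upon. *)
Definition cert_A12 (t : bool * nat) : Z := - nth 0 [:: 6188; 1820; 455; 91; 13; 1] t.2./2.

Definition cert_bound (t : bool * nat) : Z :=
  - nth 0 [:: 100368; 50388; 25160; 11580; 5280; 2165; 870; 303; 100; 27; 6; 1] (t.1 + t.2)%N.

Definition rel_A12 (i : bool * nat) : Z :=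
  match i with (false, 12%N) => 1 | (true, 11%N) => -2 | _ => 0 end.

Definition rel_bound (i : bool * nat) : Z :=
  match i with
  | (false, 0%N) => -771120
  | (false, 12%N) | (true, 11%N) => 12
  | (false, 14%N) | (true, 13%N) => 1
  | _ => 0
  end.

End Certificates.

Lemma certifies_A12 :
  certifies weights36 coef_row36 admissible36 cert_A12 low_rows (2 ^+ 35) rel_A12.
Proof. by vm_compute. Qed.

Lemma certifies_bound :
  certifies weights36 coef_row36 admissible36 cert_bound low_rows (2 ^+ 33) rel_bound.
Proof. by vm_compute. Qed.

Lemma sum_weights36 (V : nmodType) (G : bool * nat -> V) :
  \sum_(i <- weights36) G i = \sum_b \sum_(j < 36) G (b, val j).
Proof. by rewrite big_cat !big_map big_bool /= addrC !big_mkord. Qed.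

Lemma natr_Z n : n%:R = Z.of_nat n :> Z.
Proof. by rewrite -[in RHS](natn n) rmorph_nat. Qed.

Lemma lform_coef_row36 (c : bool -> nat -> Z) e k : (k < 36)%N ->
  lform weights36 (fun i => c i.1 i.2) (coef_row36 (e, k))
  = 2 ^+ 36 * c e k - \sum_b mw_kernel e b * \sum_(j < 36) c b j * kraw (35 - j) j k.
Proof.
move=> k_lt; rewrite /lform sum_weights36.
have split_row b (j : 'I_36) : c b j * coef_row36 (e, k) (b, val j)
    = (if (b, val j) == (e, k) then 2 ^+ 36 * c b j else 0)
      - mw_kernel e b * (c b j * kraw (35 - j) j k).
  by rewrite /coef_row36 mulrBr mulrCA; case: eqP; rewrite ?mulr0 // mulrC.
under eq_bigr do rewrite (eq_bigr _ (fun j _ => split_row _ j)) sumrB.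
rewrite sumrB; congr (_ - _); last by apply: eq_bigr => b _; rewrite mulr_sumr.
rewrite (bigD1 e) //= [X in _ + X]big1 => [|b /negbTE b_ne]; last first.
  by rewrite big1 // => j _; rewrite xpair_eqE b_ne.
rewrite addr0 (bigD1 (Ordinal k_lt)) //= !eqxx [X in _ + X]big1 ?addr0 // => j j_ne.
by rewrite xpair_eqE eqxx /=; case: eqP => // jk; case/eqP: j_ne; apply: val_inj.
Qed.

Lemma near_extremal36_relations (c : bool -> nat -> nat) :
  (forall (b : bool) j, ~~ admissible_wt 12 (b + j) -> c b j = 0%N) -> (c false 0 = 1)%N ->
  (forall e k, (k < 12)%N ->
     2 ^+ 36 * (c e k)%:R
     = \sum_b mw_kernel e b * \sum_(j < 36) (c b j)%:R * kraw (35 - j) j k :> Z) ->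
  (c false 12 = 2 * c true 11)%N /\
  (12 * (c false 12 + c true 11) + c false 14 + c true 13 = 771120)%N.
Proof.
move=> c_supp c00 mw_coef.
pose x (i : bool * nat) : Z := (c i.1 i.2)%:R.
have x_supp : {in weights36, forall i, ~~ admissible36 i -> x i = 0}.
  by move=> [b j] _ /c_supp; rewrite /x /= => ->.
have rows0 : {in low_rows, forall t, lform weights36 x (coef_row36 t) = 0}.
  move=> _ /allpairsP[[e k] [_ + ->]]; rewrite mem_iota => /andP[_ k_lt].
  by rewrite (lform_coef_row36 (fun b j => (c b j)%:R)) ?mw_coef ?subrr // (ltn_trans k_lt).
have rel_A12 : Z.of_nat (c false 12%N) * 1 + (Z.of_nat (c true 11%N) * -2 + 0) = 0 :> Z.
  have := certified_relation x_supp rows0 certifies_A12.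
  rewrite (@lform_sparse _ _ _ _ [:: (false, 12%N); (true, 11%N)]) //.
  by rewrite !big_cons big_nil /x !natr_Z.
have rel_bound : Z.of_nat (c false 0%N) * (-771120 : Z) + (Z.of_nat (c false 12%N) * 12
    + (Z.of_nat (c true 11%N) * 12 + (Z.of_nat (c false 14%N) * 1
    + (Z.of_nat (c true 13%N) * 1 + 0)))) = 0 :> Z.
  have := certified_relation x_supp rows0 certifies_bound.
  rewrite (@lform_sparse _ _ _ _ [:: (false, 0%N); (false, 12%N); (true, 11%N);
                                     (false, 14%N); (true, 13%N)]) //.
  by rewrite !big_cons big_nil /x !natr_Z.
(* lia treats large nat literals as opaque atoms. *)
have lit : Z.of_nat 771120 = (771120 : Z) by vm_compute.
rewrite c00 in rel_bound; lia.
Qed.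

Local Close Scope ring_scope.

Theorem fact5p6 (F : finFieldType) (D : {vspace 'rV[F]_36}) :
  #|F| = 4 ->
  herm_self_dual D ->
  min_weight D 12 ->
  exists beta : nat, (1 <= beta <= 7140)%N /\ num_weight D 12 = (9 * beta)%N.
Proof.
move=> cardF D_sd [min_wt [x0 x0D /andP[x0_nz /eqP wt_x0]]].
pose c := split_count D ord0.
have [A12 bound] : c false 12 = 2 * c true 11 /\
    12 * (c false 12 + c true 11) + c false 14 + c true 13 = 771120.
  apply: near_extremal36_relations => [b j | | e k k_lt].
  - exact: (split_count_eq0 cardF D_sd).
  - exact: split_count_false0.
  - rewrite -[(2 ^+ 36)%R](natrX _ 2 36) -(card_self_dual cardF D_sd).
    exact: (split_MacWilliams_coef cardF D_sd ord0 e (ltn_trans k_lt _)).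
have [beta c_true] : exists beta, c true 11 = 3 * beta.
  by eexists; exact: split_count_true.
have nw : num_weight D 12 = c false 12 + c true 11 := num_weight_split D ord0 11.
have nw_pos : 0 < num_weight D 12.
  by apply/card_gt0P; exists x0; rewrite inE x0D wt_x0 eqxx.
have lit7140 : Z.of_nat 7140 = (7140 : Z)%R by vm_compute.
have lit771120 : Z.of_nat 771120 = (771120 : Z)%R by vm_compute.
exists beta; split; [apply/andP; split | rewrite nw]; lia.
Qed.
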